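(* Let $\varepsilon>0$, $\theta_0>0$, $\Delta t>0$, $A\ge0$, $N\in\mathbb{N}$, $h=L/N$, and assume $\mathcal{M}\equiv1$. Consider the scheme: given $\phi^n,\phi^{n-1}\in\mathcal{C}_{\rm per}$, find $\phi^{n+1},\mu^{n+1}\in\mathcal{C}_{\rm per}$ with $$\frac{\tfrac32\phi^{n+1}-2\phi^n+\tfrac12\phi^{n-1}}{\Delta t}=\Delta_h\mu^{n+1},$$ $$\mu^{n+1}=\ln(1+\phi^{n+1})-\ln(1-\phi^{n+1})-\theta_0(2\phi^n-\phi^{n-1})-A\Delta t\,\Delta_h(\phi^{n+1}-\phi^n)-\varepsilon^2\Delta_h\phi^{n+1}.$$ Given $\phi^n,\phi^{n-1}\in\mathcal{C}_{\rm per}$ with $\|\phi^k\|_\infty\le M$, $k=n,n-1$, for some $M>0$, and $|\overline{\phi^n}|=|\overline{\phi^{n-1}}|<1$ with $\overline{\phi^n}=\overline{\phi^{n-1}}$, there exists a unique solution $\phi^{n+1}\in\mathcal{C}_{\rm per}$ of this scheme with $\phi^{n+1}-\overline{\phi^n}\in\mathring{\mathcal{C}}_{\rm per}$ and $\|\phi^{n+1}\|_\infty<1$.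
   Context: $\Omega=(0,L)^3$, periodic; $p_i=(i-\tfrac12)h$. $\mathcal{C}_{\rm per}$: real $N$-periodic grid functions on cell centers; $\langle\nu,\xi\rangle=h^3\sum_{i,j,k=1}^N\nu_{i,j,k}\xi_{i,j,k}$; $\overline{\nu}=|\Omega|^{-1}\langle\nu,1\rangle$; $\mathring{\mathcal{C}}_{\rm per}=\{\overline\nu=0\}$; $\|\nu\|_\infty=\max|\nu_{i,j,k}|$. $\Delta_h$: standard 7-point discrete Laplacian. $A$ is the coefficient of a Douglas–Dupont-type regularization term. *)

From mathcomp Require Import all_boot all_order all_algebra.
From mathcomp Require Import all_classical all_reals all_analysis.
Set Implicit Arguments. Unset Strict Implicit. Unset Printing Implicit Defensive.
Import Order.TTheory GRing.Theory Num.Theory.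
Local Open Scope ring_scope.

(* Real N-periodic grid functions on cell centers: indices i,j,k in {0..N-1}
   (paper's 1..N), periodicity realised by cyclic successor/predecessor. *)
Definition grid (R : realType) (N : nat) := 'I_N -> 'I_N -> 'I_N -> R.

Definition lap_h (R : realType) (N : nat) (h : R) (f : grid R N) : grid R N :=
  fun i j k =>
    ((f (ordS i) j k - 2 * f i j k + f (ord_pred i) j k)
   + (f i (ordS j) k - 2 * f i j k + f i (ord_pred j) k)
   + (f i j (ordS k) - 2 * f i j k + f i j (ord_pred k))) / (h ^+ 2).

Definition ip (R : realType) (N : nat) (h : R) (nu xi : grid R N) : R :=
  h ^+ 3 * \sum_(i < N) \sum_(j < N) \sum_(k < N) nu i j k * xi i j k.

(* mean: |Omega|^{-1} <nu, 1>, |Omega| = L^3 *)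
Definition gmean (R : realType) (N : nat) (L h : R) (nu : grid R N) : R :=
  ip h nu (fun _ _ _ => 1) / (L ^+ 3).

Definition normInf (R : realType) (N : nat) (nu : grid R N) : R :=
  \big[Num.max/0]_(i < N) \big[Num.max/0]_(j < N) \big[Num.max/0]_(k < N) `|nu i j k|.

Definition scheme (R : realType) (N : nat) (h eps theta0 dt A : R)
  (phinm1 phin phi mu : grid R N) : Prop :=
  (forall i j k,
    ((3%:R / 2%:R) * phi i j k - 2 * phin i j k + (1 / 2%:R) * phinm1 i j k) / dt
    = lap_h h mu i j k) /\
  (forall i j k,
    mu i j k = ln (1 + phi i j k) - ln (1 - phi i j k)
               - theta0 * (2 * phin i j k - phinm1 i j k)
               - A * dt * lap_h h (fun a b c => phi a b c - phin a b c) i j k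
               - eps ^+ 2 * lap_h h phi i j k).

From HB Require Import structures.
From mathcomp Require Import all_boot all_order all_algebra.
From mathcomp Require Import all_classical all_reals all_analysis.
From mathcomp Require Import perm ring lra.
Set Implicit Arguments. Unset Strict Implicit. Unset Printing Implicit Defensive.
Import Order.TTheory GRing.Theory Num.Theory.
Local Open Scope ring_scope.

(* Put b = (4 phi^n - phi^{n-1})/3, tau = 2 dt/3 and kappa = A dt + eps^2.  The
   scheme says that phi - b = tau Lap mu with mu = ln(1+phi) - ln(1-phi) + g
   - kappa Lap phi, for a grid g depending only on phi^n and phi^{n-1}.  As the
   discrete Laplacian is invertible on mean-zero grids, this amounts to asking that
   mu - tau^-1 Lap^-1 (phi - b) be constant, i.e. that phi be a critical point,
   under the constraint sum phi = sum b, of the energy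
     sum ((1+phi) ln(1+phi) + (1-phi) ln(1-phi) + g phi)
     - kappa/2 <phi, Lap phi> - 1/(2 tau) <phi - b, Lap^-1 (phi - b)>.
   Minimise it over the compact set of grids of that mass with values in
   [-(1-d), 1-d].  At a minimiser, moving mass from one node to another cannot
   lower the energy, which compares the chemical potentials at the two nodes.  Near
   the faces the logarithm is of size -ln d while the rest of the potential is
   bounded independently of d, so for small d the minimiser stays off the faces and
   its chemical potential is constant.  Uniqueness: the difference e of two
   solutions satisfies <e, mu1 - mu2> <= 0, whereas ln(1+x) - ln(1-x) is increasing
   and -Lap is nonnegative. *)

Section GridSum.
Variables (R : realType) (N : nat).
Local Notation G := (grid R N).
Implicit Types (u v w : G) (c t : R).

Definition gsum u : R := \sum_(i < N) \sum_(j < N) \sum_(k < N) u i j k.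
Definition gdot u v : R := gsum (fun i j k => u i j k * v i j k).

Lemma gsumE u : gsum u = \sum_(x : 'I_N * 'I_N * 'I_N) u x.1.1 x.1.2 x.2.
Proof.
by rewrite /gsum !pair_big /=; apply: eq_bigr => -[[i j] k].
Qed.

Lemma eq_gsum u v : (forall i j k, u i j k = v i j k) -> gsum u = gsum v.
Proof. by move=> uv; rewrite !gsumE; apply: eq_bigr => x _; apply: uv. Qed.

Lemma gsumD u v : gsum (fun i j k => u i j k + v i j k) = gsum u + gsum v.
Proof. by rewrite !gsumE big_split. Qed.

Lemma gsumN u : gsum (fun i j k => - u i j k) = - gsum u.
Proof. by rewrite !gsumE sumrN. Qed.

Lemma gsumB u v : gsum (fun i j k => u i j k - v i j k) = gsum u - gsum v.
Proof. by rewrite gsumD gsumN. Qed.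

Lemma gsumZ c u : gsum (fun i j k => c * u i j k) = c * gsum u.
Proof. by rewrite !gsumE mulr_sumr. Qed.

Lemma gsum_cst c : gsum (fun _ _ _ => c) = N%:R ^+ 3 * c.
Proof.
by rewrite gsumE sumr_const !card_prod !card_ord -[LHS]mulr_natl !natrM exprS expr2 mulrA.
Qed.

Lemma ler_gsum u v : (forall i j k, u i j k <= v i j k) -> gsum u <= gsum v.
Proof. by move=> uv; rewrite !gsumE; apply: ler_sum => x _; apply: uv. Qed.

Lemma gsum_ge0 u : (forall i j k, 0 <= u i j k) -> 0 <= gsum u.
Proof. by move=> u_ge0; rewrite gsumE; apply: sumr_ge0 => x _; apply: u_ge0. Qed.

Lemma ler_gsum_term u i j k :
  (forall i j k, 0 <= u i j k) -> u i j k <= gsum u.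
Proof.
move=> u_ge0; rewrite gsumE (bigD1 (i, j, k)) //= lerDl.
by apply: sumr_ge0 => x _; apply: u_ge0.
Qed.

Lemma gsum_ge0_eq0 u : (forall i j k, 0 <= u i j k) -> gsum u <= 0 ->
  forall i j k, u i j k = 0.
Proof.
move=> u_ge0 u_le0 i j k.
have : gsum u = 0 by apply/le_anti; rewrite u_le0 gsum_ge0.
rewrite gsumE => u0.
by apply: (psumr_eq0P _ u0 (i := (i, j, k))) => // x _; apply: u_ge0.
Qed.

Lemma ltr_gsum u v : (0 < N)%N ->
  (forall i j k, u i j k < v i j k) -> gsum u < gsum v.
Proof.
move=> N_gt0 uv; rewrite !gsumE; apply: ltr_sum => [|x _]; last exact: uv.
have o := Ordinal N_gt0.
by apply/hasP; exists (o, o, o); rewrite ?mem_index_enum.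
Qed.

Lemma exists_le_of_gsum_eq u v : (0 < N)%N -> gsum u = gsum v ->
  exists i j k, u i j k <= v i j k.
Proof.
move=> N_gt0 uv; apply: contrapT => no_le.
have vu i j k : v i j k < u i j k.
  by rewrite ltNge; apply/negP => le_uv; apply: no_le; exists i, j, k.
by have := ltr_gsum N_gt0 vu; rewrite uv ltxx.
Qed.

Definition gsub u v : G := fun i j k => u i j k - v i j k.
Definition pert u w t : G := fun i j k => u i j k + t * w i j k.

Lemma gsum_pert u w t : gsum (pert u w t) = gsum u + t * gsum w.
Proof. by rewrite gsumD gsumZ. Qed.

Lemma gdotC u v : gdot u v = gdot v u.
Proof. by apply: eq_gsum => i j k; rewrite mulrC. Qed.

Definition gdelta i0 j0 k0 : G :=
  fun i j k => ((i == i0) && (j == j0) && (k == k0))%:R.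

Lemma gdot_gdelta u i0 j0 k0 : gdot (gdelta i0 j0 k0) u = u i0 j0 k0.
Proof.
rewrite /gdot gsumE (bigD1 (i0, j0, k0)) //= big1 ?addr0.
  by rewrite /gdelta !eqxx mul1r.
by move=> [[i j] k]; rewrite /gdelta !xpair_eqE => /negbTE /= ->; rewrite mul0r.
Qed.

Lemma gsum_gdelta i0 j0 k0 : gsum (gdelta i0 j0 k0) = 1.
Proof.
by rewrite -(gdot_gdelta (fun _ _ _ => 1) i0 j0 k0); apply: eq_gsum => *; rewrite mulr1.
Qed.

End GridSum.

Arguments gdelta {R N}.

Section TorusShift.
Variables (R : realType) (N : nat).
Local Notation G := (grid R N).
Local Notation T := ('I_N * 'I_N * 'I_N)%type.
Implicit Types (u v : G) (s : {perm T}).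

Definition gperm s u : G := fun i j k => let x := s (i, j, k) in u x.1.1 x.1.2 x.2.

Lemma gsum_perm s u : gsum (gperm s u) = gsum u.
Proof. by rewrite !gsumE [RHS](reindex_inj (@perm_inj _ s)); apply: eq_bigr => -[[]]. Qed.

Lemma triple_eta (x : T) : (x.1.1, x.1.2, x.2) = x.
Proof. by case: x => [[]]. Qed.

Lemma gdot_perml s u v : gdot (gperm s u) v = gdot u (gperm s^-1%g v).
Proof.
rewrite /gdot -(gsum_perm s^-1%g); apply: eq_gsum => i j k.
by rewrite /gperm /= triple_eta permKV.
Qed.

Lemma gdot_permr s u v : gdot u (gperm s v) = gdot (gperm s^-1%g u) v.
Proof. by rewrite gdot_perml invgK. Qed.

Lemma gdot_perm s u v : gdot (gperm s u) (gperm s v) = gdot u v.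
Proof. exact: (gsum_perm s (fun i j k => u i j k * v i j k)). Qed.

Definition diff2 s u : G :=
  fun i j k => gperm s u i j k - 2 * u i j k + gperm s^-1%g u i j k.

Lemma gdot_diff2E s u v :
  gdot u (diff2 s v) = gdot u (gperm s v) - 2 * gdot u v + gdot u (gperm s^-1%g v).
Proof.
by rewrite -gsumZ -gsumB -gsumD; apply: eq_gsum => i j k; rewrite /diff2; ring.
Qed.

Lemma gdot_diff2C s u v : gdot u (diff2 s v) = gdot (diff2 s u) v.
Proof.
rewrite [LHS]gdot_diff2E [RHS]gdotC [RHS]gdot_diff2E.
rewrite (gdot_permr s u v) (gdot_permr s^-1%g u v) invgK (gdotC v u).
by rewrite (gdotC v (gperm s u)) (gdotC v (gperm _ u)); ring.
Qed.

Lemma gdot_diff2 s u :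
  gdot u (diff2 s u) = - gsum (fun i j k => (gperm s u i j k - u i j k) ^+ 2).
Proof.
have sq : gsum (fun i j k => (gperm s u i j k - u i j k) ^+ 2)
    = gdot (gperm s u) (gperm s u) - 2 * gdot u (gperm s u) + gdot u u.
  by rewrite -gsumZ -gsumB -gsumD; apply: eq_gsum => i j k; ring.
rewrite sq gdot_perm gdot_diff2E (gdot_permr s^-1%g u u) invgK.
by rewrite (gdotC (gperm s u) u); ring.
Qed.

Definition tshift (a b c : 'I_N -> 'I_N) (x : T) : T := (a x.1.1, b x.1.2, c x.2).

Lemma tshift_inj a b c :
  injective a -> injective b -> injective c -> injective (tshift a b c).
Proof. by move=> ia ib ic [[? ?] ?] [[? ?] ?] [/ia -> /ib -> /ic ->]. Qed.

Lemma tshiftV a b c a' b' c' (ia : injective a) (ib : injective b)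
    (ic : injective c) :
  cancel a' a -> cancel b' b -> cancel c' c ->
  forall x, (perm (tshift_inj ia ib ic))^-1%g x = tshift a' b' c' x.
Proof.
move=> Ka Kb Kc x; apply: (@perm_inj _ (perm (tshift_inj ia ib ic))).
by rewrite permKV permE /tshift /= Ka Kb Kc triple_eta.
Qed.

Definition shiftx := perm (tshift_inj (@ordS_inj N) (@inj_id _) (@inj_id _)).
Definition shifty := perm (tshift_inj (@inj_id _) (@ordS_inj N) (@inj_id _)).
Definition shiftz := perm (tshift_inj (@inj_id _) (@inj_id _) (@ordS_inj N)).

Lemma gperm_shiftx u i j k : gperm shiftx u i j k = u (ordS i) j k.
Proof. by rewrite /gperm permE. Qed.

Lemma gperm_shifty u i j k : gperm shifty u i j k = u i (ordS j) k.
Proof. by rewrite /gperm permE. Qed.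

Lemma gperm_shiftz u i j k : gperm shiftz u i j k = u i j (ordS k).
Proof. by rewrite /gperm permE. Qed.

Variable h : R.

Lemma lap_hE u i j k : lap_h h u i j k =
  (diff2 shiftx u i j k + diff2 shifty u i j k + diff2 shiftz u i j k) / h ^+ 2.
Proof.
have K : cancel (@id 'I_N) id by [].
rewrite /diff2 gperm_shiftx gperm_shifty gperm_shiftz /gperm.
rewrite (tshiftV _ _ _ (@ord_predK N) K K) (tshiftV _ _ _ K (@ord_predK N) K).
by rewrite (tshiftV _ _ _ K K (@ord_predK N)).
Qed.

Lemma gdot_lapE u v : gdot u (lap_h h v) =
  (gdot u (diff2 shiftx v) + gdot u (diff2 shifty v) + gdot u (diff2 shiftz v))
  / h ^+ 2.
Proof.
by rewrite -!gsumD mulrC -gsumZ; apply: eq_gsum => i j k; rewrite lap_hE; ring.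
Qed.

Lemma gdot_lapC u v : gdot u (lap_h h v) = gdot (lap_h h u) v.
Proof.
rewrite [LHS]gdot_lapE [RHS]gdotC [RHS]gdot_lapE !(gdot_diff2C _ u).
by rewrite !(gdotC (diff2 _ u)).
Qed.

Lemma lap_cst c (i j k : 'I_N) : lap_h h (fun _ _ _ => c) i j k = 0.
Proof. by rewrite /lap_h; ring. Qed.

Lemma gsum_lap u : gsum (lap_h h u) = 0.
Proof.
have -> : gsum (lap_h h u) = gdot (fun _ _ _ => 1) (lap_h h u).
  by apply: eq_gsum => i j k; rewrite mul1r.
rewrite gdot_lapC /gdot (eq_gsum (v := fun _ _ _ => 0)) ?gsum_cst ?mulr0 // => i j k.
by rewrite lap_cst mul0r.
Qed.

Lemma gdot_lap u : gdot u (lap_h h u) =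
  - (gsum (fun i j k => (u (ordS i) j k - u i j k) ^+ 2)
   + gsum (fun i j k => (u i (ordS j) k - u i j k) ^+ 2)
   + gsum (fun i j k => (u i j (ordS k) - u i j k) ^+ 2)) / h ^+ 2.
Proof.
rewrite gdot_lapE !gdot_diff2 -!opprD.
by congr (- (_ + _ + _) / _); apply: eq_gsum => i j k;
  rewrite ?gperm_shiftx ?gperm_shifty ?gperm_shiftz.
Qed.

Lemma gdot_lap_le0 u : gdot u (lap_h h u) <= 0.
Proof.
rewrite gdot_lap mulNr oppr_le0 divr_ge0 ?sqr_ge0 //.
by rewrite !addr_ge0 // gsum_ge0 // => *; apply: sqr_ge0.
Qed.

Lemma lap_pert u w t i j k :
  lap_h h (pert u w t) i j k = pert (lap_h h u) (lap_h h w) t i j k.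
Proof. by rewrite /lap_h /pert; ring. Qed.

End TorusShift.

Lemma ordS_invariant_cst (T : Type) (N : nat) (F : 'I_N -> T) :
  (forall i, F (ordS i) = F i) -> forall i i', F i = F i'.
Proof.
move=> FS; suff F0 m (m_lt : (m < N)%N) (N_gt0 : (0 < N)%N) :
    F (Ordinal m_lt) = F (Ordinal N_gt0).
  by move=> [i ?] [i' ?]; rewrite !(F0 _ _ (leq_ltn_trans (leq0n i) _)).
elim: m m_lt => [|m IHm] m_lt; first by congr F; apply: val_inj.
rewrite -(IHm (ltnW m_lt)) -(FS (Ordinal (ltnW m_lt))); congr F; apply: val_inj => /=.
by rewrite modn_small.
Qed.

Lemma lap_eq0_cst (R : realType) (N : nat) (h : R) (u : grid R N) : h != 0 ->
  (forall i j k, lap_h h u i j k = 0) -> forall i j k i' j' k', u i j k = u i' j' k'.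
Proof.
move=> h_neq0 lap_u0.
have : gdot u (lap_h h u) = 0.
  rewrite /gdot (eq_gsum (v := fun _ _ _ => 0)) ?gsum_cst ?mulr0 // => i j k.
  by rewrite lap_u0 mulr0.
rewrite gdot_lap => /eqP; rewrite mulf_eq0 invr_eq0 expf_eq0 (negbTE h_neq0) orbF.
rewrite oppr_eq0 => /eqP sq0.
have sq_ge0 (v : grid R N) : 0 <= gsum (fun i j k => v i j k ^+ 2).
  by apply: gsum_ge0 => *; apply: sqr_ge0.
have diff0 (v : grid R N) : gsum (fun i j k => v i j k ^+ 2) <= 0 ->
    forall i j k, v i j k = 0.
  move=> v0 i j k; apply/eqP; rewrite -sqrf_eq0; apply/eqP.
  by apply: (gsum_ge0_eq0 (u := fun i j k => v i j k ^+ 2)) => // *; apply: sqr_ge0.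
have := sq_ge0 (fun i j k => u (ordS i) j k - u i j k).
have := sq_ge0 (fun i j k => u i (ordS j) k - u i j k).
have := sq_ge0 (fun i j k => u i j (ordS k) - u i j k).
move=> gez gey gex.
have /diff0 ux : gsum (fun i j k => (u (ordS i) j k - u i j k) ^+ 2) <= 0 by lra.
have /diff0 uy : gsum (fun i j k => (u i (ordS j) k - u i j k) ^+ 2) <= 0 by lra.
have /diff0 uz : gsum (fun i j k => (u i j (ordS k) - u i j k) ^+ 2) <= 0 by lra.
move=> i j k i' j' k'.
rewrite (ordS_invariant_cst (F := fun x => u x j k) _ i i') => [|x].
  rewrite (ordS_invariant_cst (F := fun y => u i' y k) _ j j') => [|y].
    by apply: (ordS_invariant_cst (F := u i' j')) => z; apply/eqP; rewrite -subr_eq0 uz.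
  by apply/eqP; rewrite -subr_eq0 uy.
by apply/eqP; rewrite -subr_eq0 ux.
Qed.

Lemma mem_limg_of_ker_line (K : fieldType) (vT : vectType K) (f : {linear vT -> vT})
    (e : vT) (m : vT -> K) :
  (forall u, f u = 0 -> exists c, u = c *: e) ->
  (forall c u v, m (c *: u + v) = c * m u + m v) ->
  (forall u, m (f u) = 0) -> m e != 0 ->
  forall v, m v = 0 -> v \in limg (linfun f).
Proof.
move=> ker_f m_lin m_f me_neq0 v mv0; set F := linfun f.
have dim_ker : (\dim (lker F) <= 1)%N.
  have ker_line : (lker F <= <[e]>)%VS.
    apply/subvP => u; rewrite memv_ker lfunE => /eqP /ker_f [c ->].
    by rewrite memvZ ?memv_line.
  by rewrite (leq_trans (dimvS ker_line)) // dim_vline leq_b1.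
have rank_F := limg_ker_dim F fullv; rewrite capfv in rank_F.
apply: contraT => v_notin.
have dim_lt : (\dim (limg F) < \dim (limg F + <[v]>))%N.
  rewrite (ltn_leqif (dimv_leqif_eq (addvSl _ _))).
  by apply: contra v_notin => /eqP ->; apply: (subvP (addvSr _ _)); apply: memv_line.
have /eqP full : (limg F + <[v]>)%VS == fullv.
  by rewrite eqEdim subvf -rank_F (leq_trans (leq_add dim_ker (leqnn _))).
have : e \in (limg F + <[v]>)%VS by rewrite full memvf.
case/memv_addP => u /memv_imgP [x _ ->] [w /vlineP [c ->] e_eq].
by move: me_neq0; rewrite e_eq lfunE addrC m_lin m_f mv0 mulr0 addr0 eqxx.
Qed.

Section InverseLaplacian.
Variables (R : realType) (N : nat) (h : R).
Local Notation G := (grid R N).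
Local Notation T := ('I_N * 'I_N * 'I_N)%type.
Local Notation n := #|{: T}|.
Implicit Types (u v g : G).

Definition grid_of_vec (w : 'rV[R]_n) : G := fun i j k => w 0 (enum_rank (i, j, k)).
Definition vec_of_grid g : 'rV[R]_n :=
  \row_p let x := enum_val p in g x.1.1 x.1.2 x.2.

Lemma vec_of_gridK g : grid_of_vec (vec_of_grid g) = g.
Proof. by do 3 apply: funext => ?; rewrite /grid_of_vec mxE enum_rankK. Qed.

Lemma grid_of_vecK : cancel grid_of_vec vec_of_grid.
Proof. by move=> w; apply/rowP => p; rewrite mxE /grid_of_vec triple_eta enum_valK. Qed.

Lemma grid_of_vecP (c : R) w1 w2 :
  grid_of_vec (c *: w1 + w2) = pert (grid_of_vec w2) (grid_of_vec w1) c.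
Proof. by do 3 apply: funext => ?; rewrite /grid_of_vec /pert !mxE addrC. Qed.

Lemma vec_of_gridP u w (t : R) :
  vec_of_grid (pert u w t) = vec_of_grid u + t *: vec_of_grid w.
Proof. by apply/rowP => p; rewrite !mxE. Qed.

Definition lapv (w : 'rV[R]_n) : 'rV[R]_n := vec_of_grid (lap_h h (grid_of_vec w)).

Lemma lapv_is_linear : linear lapv.
Proof.
move=> c w1 w2; rewrite /lapv grid_of_vecP addrC -vec_of_gridP.
by congr vec_of_grid; do 3 apply: funext => ?; rewrite lap_pert.
Qed.

HB.instance Definition _ := GRing.isLinear.Build _ _ _ _ lapv lapv_is_linear.

Definition ilap g : G := grid_of_vec ((linfun lapv)^-1%VF (vec_of_grid g)).

Lemma ilap_pert u w (t : R) i j k :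
  ilap (pert u w t) i j k = pert (ilap u) (ilap w) t i j k.
Proof. by rewrite /ilap vec_of_gridP addrC linearP grid_of_vecP. Qed.

Lemma vec_of_gdelta p :
  vec_of_grid (let x := enum_val p in gdelta x.1.1 x.1.2 x.2) = delta_mx 0 p.
Proof.
apply/rowP => q; rewrite !mxE /gdelta -!xpair_eqE !triple_eta.
by rewrite (inj_eq enum_val_inj) xpair_eqE eqxx.
Qed.

Lemma ilap_green g i j k :
  ilap g i j k = gsum (fun a b c => g a b c * ilap (gdelta a b c) i j k).
Proof.
rewrite gsumE (reindex (fun p : 'I_n => enum_val p)) /=; last first.
  by exists enum_rank => x _; rewrite ?enum_valK ?enum_rankK.
rewrite /ilap {1}/grid_of_vec {1}(row_sum_delta (vec_of_grid g)) linear_sum summxE.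
by apply: eq_bigr => p _; rewrite linearZ mxE vec_of_gdelta /vec_of_grid mxE.
Qed.

Hypotheses (h_neq0 : h != 0) (N_gt0 : (0 < N)%N).

Lemma lap_ilap g : gsum g = 0 -> forall i j k, lap_h h (ilap g) i j k = g i j k.
Proof.
move=> g0; have g_img : vec_of_grid g \in limg (linfun lapv).
  apply: (mem_limg_of_ker_line (e := vec_of_grid (fun _ _ _ => 1))
    (m := fun w => gsum (grid_of_vec w))); rewrite ?vec_of_gridK //.
  - move=> w /(congr1 grid_of_vec); rewrite vec_of_gridK => lap_w0.
    have /(lap_eq0_cst h_neq0) w_cst : forall i j k, lap_h h (grid_of_vec w) i j k = 0.
      by move=> i j k; rewrite lap_w0 /grid_of_vec mxE.
    exists (grid_of_vec w (Ordinal N_gt0) (Ordinal N_gt0) (Ordinal N_gt0)).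
    by rewrite -[LHS]grid_of_vecK; apply/rowP => p; rewrite !mxE mulr1; apply: w_cst.
  - by move=> c w1 w2; rewrite grid_of_vecP gsum_pert addrC.
  - by move=> w; rewrite /lapv vec_of_gridK gsum_lap.
  - by rewrite gsum_cst mulr1 expf_eq0 pnatr_eq0 -lt0n N_gt0.
move=> i j k; have := limg_lfunVK g_img; rewrite lfunE /= /lapv => /(congr1 grid_of_vec).
by rewrite !vec_of_gridK => ->.
Qed.

Lemma gdot_ilapC u v : gsum u = 0 -> gsum v = 0 ->
  gdot u (ilap v) = gdot v (ilap u).
Proof.
move=> u0 v0; have -> : gdot u (ilap v) = gdot (lap_h h (ilap u)) (ilap v).
  by apply: eq_gsum => i j k; rewrite lap_ilap.
by rewrite -gdot_lapC gdotC; apply: eq_gsum => i j k; rewrite lap_ilap.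
Qed.

End InverseLaplacian.

Section LogRatio.
Variable R : realType.
Implicit Types x y : R.

Definition log_ratio x := ln (1 + x) - ln (1 - x).

Lemma ltr_log_ratio x y : -1 < x -> x < y -> y < 1 -> log_ratio x < log_ratio y.
Proof.
move=> x_gt xy y_lt; rewrite /log_ratio.
have : ln (1 + x) < ln (1 + y) by rewrite ltr_ln ?posrE; lra.
have : ln (1 - y) < ln (1 - x) by rewrite ltr_ln ?posrE; lra.
lra.
Qed.

Lemma ler_log_ratio x y : -1 < x -> x <= y -> y < 1 -> log_ratio x <= log_ratio y.
Proof.
move=> x_gt; rewrite le_eqVlt => /predU1P [-> _ //|xy y_lt].
exact/ltW/ltr_log_ratio.
Qed.

Lemma log_ratio_top d : 0 < d -> d <= 1 -> - ln d <= log_ratio (1 - d).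
Proof.
move=> d_gt0 d_le1; rewrite /log_ratio (_ : 1 - (1 - d) = d); last by ring.
have : 0 <= ln (1 + (1 - d)) by apply: ln_ge0; lra.
lra.
Qed.

Lemma log_ratio_bot d : 0 < d -> d <= 1 -> log_ratio (- (1 - d)) <= ln d.
Proof.
move=> d_gt0 d_le1; rewrite /log_ratio (_ : 1 + - (1 - d) = d); last by ring.
have : 0 <= ln (1 - - (1 - d)) by apply: ln_ge0; lra.
lra.
Qed.

Lemma log_ratio_mono x y : -1 < x < 1 -> -1 < y < 1 ->
  0 <= (x - y) * (log_ratio x - log_ratio y).
Proof.
move=> /andP [x_gt x_lt] /andP [y_gt y_lt]; case: (ltrgtP x y) => [xy|yx|->].
- by have := ltr_log_ratio x_gt xy y_lt => dxy; apply: mulr_le0; lra.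
- by have := ltr_log_ratio y_gt yx x_lt => dyx; apply: mulr_ge0; lra.
- by rewrite subrr mul0r.
Qed.

Lemma log_ratio_mono_eq0 x y : -1 < x < 1 -> -1 < y < 1 ->
  (x - y) * (log_ratio x - log_ratio y) = 0 -> x = y.
Proof.
move=> /andP [x_gt x_lt] /andP [y_gt y_lt] /eqP; rewrite mulf_eq0 subr_eq0.
case/orP => [/eqP //|]; rewrite subr_eq0 => /eqP dxy.
case: (ltrgtP x y) => [xy|yx|//].
- by have := ltr_log_ratio x_gt xy y_lt; rewrite dxy ltxx.
- by have := ltr_log_ratio y_gt yx x_lt; rewrite dxy ltxx.
Qed.

Lemma xlnx_diff_le x s : 0 < x -> 0 < x + s ->
  (x + s) * ln (x + s) - x * ln x <= s * (ln x + 1) + s ^+ 2 / x.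
Proof.
move=> x_gt0 xs_gt0.
have ratio : (x + s) / x = 1 + s / x by field; rewrite gt_eqF.
have ln_diff : ln (x + s) - ln x <= s / x.
  rewrite -ln_div ?posrE // ratio; apply: le_ln1Dx.
  by have := divr_gt0 xs_gt0 x_gt0; rewrite ratio; lra.
have := ler_wpM2l (ltW xs_gt0) ln_diff.
rewrite (_ : (x + s) * (s / x) = s + s ^+ 2 / x); last by field; rewrite gt_eqF.
by rewrite mulrBr; lra.
Qed.

End LogRatio.

Section Energy.
Variables (R : realType) (N : nat) (h a tau d : R) (g b : grid R N).
Local Notation G := (grid R N).
Implicit Types (u v w phi : G) (x s t : R).

(* Truncating the logarithm at [d] makes [ent] continuous on all grids; it is
   inactive at the points that are [inside]. *)
Definition lnt x := ln (Num.max x d).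
Definition ent x := (1 + x) * lnt (1 + x) + (1 - x) * lnt (1 - x).
Definition inside x := d <= 1 + x /\ d <= 1 - x.

Hypothesis d_gt0 : 0 < d.

Lemma ent_diff_le x s : inside x -> inside (x + s) ->
  ent (x + s) - ent x <= s * log_ratio x + s ^+ 2 * (1 / (1 + x) + 1 / (1 - x)).
Proof.
move=> [xl xr] [xsl xsr]; rewrite /ent /lnt !max_l //.
(* lra only uses the local context, not section hypotheses. *)
have d0 := d_gt0.
have xl_gt0 : 0 < 1 + x by lra.
have xr_gt0 : 0 < 1 - x by lra.
have := @xlnx_diff_le _ (1 + x) s xl_gt0 ltac:(lra).
have := @xlnx_diff_le _ (1 - x) (- s) xr_gt0 ltac:(lra).
have -> : 1 + (x + s) = 1 + x + s by ring.
have -> : 1 - (x + s) = 1 - x + - s by ring.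
have -> : s ^+ 2 * (1 / (1 + x) + 1 / (1 - x)) = s ^+ 2 / (1 + x) + (- s) ^+ 2 / (1 - x).
  by rewrite sqrrN; field; rewrite !gt_eqF.
rewrite /log_ratio; lra.
Qed.

Definition admissible phi := (forall i j k, inside (phi i j k)) /\ gsum phi = gsum b.

Definition energy phi : R :=
  gsum (fun i j k => ent (phi i j k) + g i j k * phi i j k)
  - a / 2 * gdot phi (lap_h h phi)
  - 1 / (2 * tau) * gdot (gsub phi b) (ilap h (gsub phi b)).

Definition chempot_reg phi : G := fun i j k =>
  g i j k - a * lap_h h phi i j k - 1 / tau * ilap h (gsub phi b) i j k.

Definition chempot phi : G := fun i j k => log_ratio (phi i j k) + chempot_reg phi i j k.

Definition curv phi w : R :=
  gsum (fun i j k => w i j k ^+ 2 * (1 / (1 + phi i j k) + 1 / (1 - phi i j k)))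
  - a / 2 * gdot w (lap_h h w) - 1 / (2 * tau) * gdot w (ilap h w).

Lemma gdot_pert (T : G -> G) u w t :
  (forall i j k, T (pert u w t) i j k = pert (T u) (T w) t i j k) ->
  gdot u (T w) = gdot w (T u) ->
  gdot (pert u w t) (T (pert u w t))
  = gdot u (T u) + 2 * t * gdot w (T u) + t ^+ 2 * gdot w (T w).
Proof.
move=> T_lin T_sym; rewrite /gdot (eq_gsum (v := fun i j k => u i j k * T u i j k
  + (t * (u i j k * T w i j k) + (t * (w i j k * T u i j k)
  + t ^+ 2 * (w i j k * T w i j k))))) => [|i j k]; last by rewrite T_lin /pert; ring.
rewrite !gsumD !gsumZ.
have -> : gsum (fun i j k => u i j k * T w i j k) = gdot w (T u) := T_sym.
rewrite /gdot; ring.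
Qed.

Hypotheses (h_neq0 : h != 0) (N_gt0 : (0 < N)%N).

Lemma energy_pert_le phi w t : gsum w = 0 -> gsum phi = gsum b ->
  (forall i j k, inside (phi i j k)) -> (forall i j k, inside (pert phi w t i j k)) ->
  energy (pert phi w t) - energy phi <= t * gdot w (chempot phi) + t ^+ 2 * curv phi w.
Proof.
move=> w0 phi_b phi_in pert_in.
have phib0 : gsum (gsub phi b) = 0 by rewrite gsumB phi_b subrr.
rewrite /energy; have -> : gsub (pert phi w t) b = pert (gsub phi b) w t.
  by do 3 apply: funext => ?; rewrite /gsub /pert; ring.
rewrite (gdot_pert (lap_pert h phi w t)); last by rewrite gdot_lapC gdotC.
rewrite (gdot_pert (ilap_pert h (gsub phi b) w t)); last by rewrite gdot_ilapC.
have ent_le : gsum (fun i j k => ent (pert phi w t i j k) + g i j k * pert phi w t i j k)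
    <= gsum (fun i j k => ent (phi i j k) + g i j k * phi i j k)
     + t * gsum (fun i j k => w i j k * (log_ratio (phi i j k) + g i j k))
     + t ^+ 2 * gsum (fun i j k =>
         w i j k ^+ 2 * (1 / (1 + phi i j k) + 1 / (1 - phi i j k))).
  rewrite -!gsumZ -!gsumD; apply: ler_gsum => i j k.
  have := ent_diff_le (phi_in i j k) (pert_in i j k); rewrite /pert exprMn; lra.
have -> : gdot w (chempot phi)
    = gsum (fun i j k => w i j k * (log_ratio (phi i j k) + g i j k))
    - a * gdot w (lap_h h phi) - 1 / tau * gdot w (ilap h (gsub phi b)).
  rewrite -!gsumZ -!gsumB; apply: eq_gsum => i j k.
  by rewrite /chempot /chempot_reg; ring.
rewrite /curv; lra.
Qed.

End Energy.

Import numFieldNormedType.Exports.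

Section GridContinuity.
Variables (R : realType) (N : nat) (h : R).
Local Notation G := (grid R N).
Local Notation V := 'rV[R]_#|{: 'I_N * 'I_N * 'I_N}|.
Implicit Types (F : V -> R) (X Y : V -> G).

Definition gcont X := forall i j k, continuous (fun v => X v i j k).

Lemma continuousD' F1 F2 : continuous F1 -> continuous F2 ->
  continuous (fun v => F1 v + F2 v).
Proof. by move=> F1c F2c v; exact: (cvgD (F1c v) (F2c v)). Qed.

Lemma continuousM' F1 F2 : continuous F1 -> continuous F2 ->
  continuous (fun v => F1 v * F2 v).
Proof. by move=> F1c F2c v; exact: (cvgM (F1c v) (F2c v)). Qed.

Lemma continuousB' F1 F2 : continuous F1 -> continuous F2 ->
  continuous (fun v => F1 v - F2 v).
Proof. by move=> F1c F2c v; exact: (cvgB (F1c v) (F2c v)). Qed.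

Lemma continuous_sum' (I : Type) (r : seq I) (F : I -> V -> R) :
  (forall i, continuous (F i)) -> continuous (fun v => \sum_(i <- r) F i v).
Proof.
move=> Fc; elim: r => [|i r IHr].
  by under eq_fun do rewrite big_nil; apply: cst_continuous.
by under eq_fun do rewrite big_cons; apply: continuousD'.
Qed.

Lemma continuous_lnt (d : R) F : 0 < d -> continuous F ->
  continuous (fun v => lnt d (F v)).
Proof.
move=> d_gt0 Fc v.
have max_c := continuous_max (Fc v) (@cst_continuous _ R d v).
have max_gt0 : 0 < Num.max (F v) d by rewrite (lt_le_trans d_gt0) // le_max lexx orbT.
exact: (continuous_comp max_c (continuous_ln max_gt0)).
Qed.

Lemma continuous_gsum X : gcont X -> continuous (fun v => gsum (X v)).
Proof. by move=> Xc; do 3 apply: continuous_sum' => ?; apply: Xc. Qed.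

Lemma continuous_gdot X Y : gcont X -> gcont Y -> continuous (fun v => gdot (X v) (Y v)).
Proof. by move=> Xc Yc; apply: continuous_gsum => i j k; apply: continuousM'. Qed.

Lemma gcont_grid_of_vec : gcont (@grid_of_vec R N).
Proof. by move=> i j k; apply: coord_continuous. Qed.

Lemma gcont_gsub X (b : G) : gcont X -> gcont (fun v => gsub (X v) b).
Proof. by move=> Xc i j k; apply: continuousB' => //; apply: cst_continuous. Qed.

Lemma gcont_lap X : gcont X -> gcont (fun v => lap_h h (X v)).
Proof.
move=> Xc i j k; apply: continuousM'; last exact: cst_continuous.
have d2 x1 y1 z1 x2 y2 z2 x3 y3 z3 : continuous (fun v =>
    X v x1 y1 z1 - 2 * X v x2 y2 z2 + X v x3 y3 z3).
  by apply: continuousD' => //; apply: continuousB' => //;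
    apply: continuousM' => //; apply: cst_continuous.
by apply: continuousD'; first apply: continuousD'; apply: d2.
Qed.

Lemma gcont_ilap X : gcont X -> gcont (fun v => ilap h (X v)).
Proof.
move=> Xc i j k; under eq_fun do rewrite ilap_green.
by apply: continuous_gsum => x y z; apply: continuousM' => //; apply: cst_continuous.
Qed.

Lemma continuous_energy (a tau d : R) (g b : G) : 0 < d ->
  continuous (fun v => energy h a tau d g b (grid_of_vec v)).
Proof.
move=> d_gt0; have Xc := gcont_grid_of_vec; have Yc := gcont_gsub (b := b) Xc.
apply: continuousB'; first apply: continuousB'.
- apply: continuous_gsum => i j k; apply: continuousD'; last first.
    by apply: continuousM' => //; apply: cst_continuous.
  have ent_c (s : R) : continuous (fun v => 1 + s * grid_of_vec v i j k).
    apply: continuousD'; first exact: cst_continuous.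
    by apply: continuousM'; first exact: cst_continuous.
  rewrite /ent; apply: continuousD'; apply: continuousM'.
  + by have := ent_c 1; under eq_fun do rewrite mul1r.
  + by apply: continuous_lnt => //; have := ent_c 1; under eq_fun do rewrite mul1r.
  + by have := ent_c (-1); under eq_fun do rewrite mulN1r.
  + by apply: continuous_lnt => //; have := ent_c (-1); under eq_fun do rewrite mulN1r.
- apply: continuousM'; first exact: cst_continuous.
  by apply: continuous_gdot => //; apply: gcont_lap.
- apply: continuousM'; first exact: cst_continuous.
  by apply: continuous_gdot => //; apply: gcont_ilap.
Qed.

End GridContinuity.

Section EnergyMinimizer.
Local Open Scope classical_set_scope.
Local Open Scope ring_scope.
Variables (R : realType) (N : nat) (h a tau d : R) (g b : grid R N).
Hypothesis d_gt0 : 0 < d.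
Local Notation V := 'rV[R]_#|{: 'I_N * 'I_N * 'I_N}|.

Lemma inside_itv x : inside d x <-> x \in `[- (1 - d), 1 - d].
Proof.
by rewrite in_itv /=; split => [[? ?]|/andP [? ?]]; [apply/andP; split|split]; lra.
Qed.

Lemma exists_energy_min c : inside d c -> gsum (fun (_ _ _ : 'I_N) => c) = gsum b ->
  exists2 phi, admissible d b phi &
    forall psi, admissible d b psi ->
      energy h a tau d g b phi <= energy h a tau d g b psi.
Proof.
move=> c_in c_sum.
set box := [set v : V | forall p, v 0 p \in `[- (1 - d), 1 - d]].
set mass := [set v : V | gsum (grid_of_vec v) = gsum b].
have box_compact : compact box.
  exact: (rV_compact (fun _ => @segment_compact R (- (1 - d)) (1 - d))).
have mass_closed : closed mass.
  apply: (@preimage_closed _ _ (fun v : V => gsum (grid_of_vec v)) [set gsum b]).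
    by move=> v _; apply: continuous_gsum; apply: gcont_grid_of_vec.
  exact: closed_eq.
have adm_vec v : box v /\ mass v <-> admissible d b (grid_of_vec v).
  split=> [[vbox vmass]|[vin vmass]]; split=> //.
    by move=> i j k; apply/inside_itv; apply: vbox.
  move=> p; rewrite -inside_itv.
  have := vin (enum_val p).1.1 (enum_val p).1.2 (enum_val p).2.
  by rewrite /grid_of_vec triple_eta enum_valK.
have [|v /set_mem /adm_vec v_adm v_min] := compact_EVT_min _
  (compact_closedI box_compact mass_closed)
  (continuous_subspaceT (@continuous_energy R N h a tau d g b d_gt0)).
  by exists (vec_of_grid (fun _ _ _ => c)); apply/adm_vec; rewrite vec_of_gridK.
exists (grid_of_vec v) => // psi psi_adm; rewrite -[psi]vec_of_gridK.
by apply: v_min; apply/mem_set/adm_vec; rewrite vec_of_gridK.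
Qed.

End EnergyMinimizer.

Section RegularPartBound.
Variables (R : realType) (N : nat) (h a tau : R) (g b : grid R N).
Local Notation G := (grid R N).
Implicit Types phi : G.

Definition unit_bounded phi := forall i j k, -1 <= phi i j k <= 1.

Lemma lap_unit_bounded phi : unit_bounded phi ->
  forall i j k, `|lap_h h phi i j k| <= 12 / h ^+ 2.
Proof.
move=> phi_b i j k; rewrite /lap_h normrM normfV (ger0_norm (sqr_ge0 h)).
rewrite ler_wpM2r ?invr_ge0 ?sqr_ge0 //.
move: (phi_b i j k) (phi_b (ordS i) j k) (phi_b (ord_pred i) j k)
  (phi_b i (ordS j) k) (phi_b i (ord_pred j) k)
  (phi_b i j (ordS k)) (phi_b i j (ord_pred k)).
move=> /andP[? ?] /andP[? ?] /andP[? ?] /andP[? ?] /andP[? ?] /andP[? ?] /andP[? ?].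
by rewrite ler_norml; apply/andP; split; lra.
Qed.

Lemma ilap_unit_bounded phi : unit_bounded phi -> forall i j k,
  `|ilap h (gsub phi b) i j k|
  <= gsum (fun x y z => (1 + `|b x y z|) * `|ilap h (gdelta x y z) i j k|).
Proof.
move=> phi_b i j k; rewrite ilap_green gsumE [leRHS]gsumE.
apply: le_trans (ler_norm_sum _ _ _) _; apply: ler_sum => -[[x y] z] _ /=.
rewrite normrM ler_wpM2r // /gsub (le_trans (ler_normB _ _)) // lerD2r.
by have /andP [? ?] := phi_b x y z; rewrite ler_norml; apply/andP; split.
Qed.

Definition reg_bound : R := gsum (fun i j k =>
  `|g i j k| + `|a| * (12 / h ^+ 2)
  + `|1 / tau| * gsum (fun x y z => (1 + `|b x y z|) * `|ilap h (gdelta x y z) i j k|)).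

Lemma chempot_reg_bounded phi : unit_bounded phi ->
  forall i j k, `|chempot_reg h a tau g b phi i j k| <= reg_bound.
Proof.
move=> phi_b i j k; rewrite /reg_bound.
apply: (le_trans _ (ler_gsum_term i j k _)) => [|x y z]; last first.
  have : 0 <= 12 / h ^+ 2 by rewrite divr_ge0 ?sqr_ge0.
  move=> ?; rewrite !addr_ge0 // mulr_ge0 //.
  by apply: gsum_ge0 => ? ? ?; rewrite mulr_ge0 // addr_ge0.
rewrite /chempot_reg (le_trans (ler_normB _ _)) // lerD //; last first.
  by rewrite normrM ler_wpM2l // ilap_unit_bounded.
rewrite (le_trans (ler_normB _ _)) // lerD // normrM ler_wpM2l //.
exact: lap_unit_bounded.
Qed.

End RegularPartBound.

Section Minimizer.
Variables (R : realType) (N : nat) (h a tau d : R) (g b phi : grid R N).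
Hypotheses (h_neq0 : h != 0) (N_gt0 : (0 < N)%N) (d_gt0 : 0 < d).
Hypothesis phi_adm : admissible d b phi.
Hypothesis phi_min : forall psi, admissible d b psi ->
  energy h a tau d g b phi <= energy h a tau d g b psi.
Local Notation G := (grid R N).
Local Notation mu := (chempot h a tau g b phi).

Lemma gdot_chempot_ge0 (w : G) t0 : gsum w = 0 -> 0 < t0 ->
  (forall t, 0 < t -> t < t0 -> forall i j k, inside d (pert phi w t i j k)) ->
  0 <= gdot w mu.
Proof.
move=> w0 t0_gt0 pert_in; rewrite leNgt; apply/negP => D_lt0.
set D := gdot w mu in D_lt0; set C := curv h a tau phi w.
set t := Num.min (t0 / 2) (- D / (2 * (`|C| + 1))).
have t_gt0 : 0 < t by rewrite lt_min divr_gt0 //= ?divr_gt0 ?mulr_gt0 //; lra.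
have t_lt : t < t0 by rewrite gt_min; apply/orP; left; lra.
have tC : t * (2 * (`|C| + 1)) <= - D.
  by rewrite -ler_pdivlMr ?mulr_gt0 ?ge_min ?lexx ?orbT //; lra.
have adm_t : admissible d b (pert phi w t).
  by split; [exact: pert_in | rewrite gsum_pert w0 mulr0 addr0; case: phi_adm].
have := energy_pert_le a tau g d_gt0 h_neq0 N_gt0 w0
  phi_adm.2 phi_adm.1 (pert_in t t_gt0 t_lt).
have := phi_min adm_t; rewrite -/D -/C => min_le pert_le.
have : 0 <= t * (D + t * C) by rewrite mulrDr mulrA -expr2; lra.
rewrite pmulr_rge0 // => DC_ge0.
have : t * C <= t * `|C| by rewrite ler_wpM2l ?ler_norm // ltW.
lra.
Qed.

Lemma chempot_transfer i1 j1 k1 i2 j2 k2 t0 :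
  (i1, j1, k1) != (i2, j2, k2) -> 0 < t0 ->
  (forall t, 0 < t -> t < t0 ->
     inside d (phi i1 j1 k1 + t) /\ inside d (phi i2 j2 k2 - t)) ->
  mu i2 j2 k2 <= mu i1 j1 k1.
Proof.
move=> p12 t0_gt0 move_in; pose w : G := gsub (gdelta i1 j1 k1) (gdelta i2 j2 k2).
have w0 : gsum w = 0 by rewrite gsumB !gsum_gdelta subrr.
have := gdot_chempot_ge0 w0 t0_gt0.
have -> : gdot w mu = mu i1 j1 k1 - mu i2 j2 k2.
  by rewrite -!gdot_gdelta -gsumB; apply: eq_gsum => i j k; rewrite /w /gsub; ring.
rewrite subr_ge0; apply=> t t_gt0 t_lt i j k; rewrite /pert /w /gsub /gdelta -!xpair_eqE.
case: eqP => [[-> -> ->]|_].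
  by rewrite (negbTE p12) subr0 mulr1; exact: (move_in t t_gt0 t_lt).1.
case: eqP => [[-> -> ->]|_].
  by rewrite sub0r mulrN1; exact: (move_in t t_gt0 t_lt).2.
by rewrite subrr mulr0 addr0; case: phi_adm.
Qed.

Variables (c K : R).
Hypothesis c_sum : gsum (fun (_ _ _ : 'I_N) => c) = gsum b.
Hypotheses (c_top : d < 1 - c) (c_bot : d < 1 + c).
Hypothesis reg_bnd : forall i j k, `|chempot_reg h a tau g b phi i j k| <= K.
Hypothesis d_small : `|log_ratio c| + 2 * K < - ln d.

Let phi_sum : gsum phi = gsum (fun (_ _ _ : 'I_N) => c).
Proof. by rewrite c_sum; case: phi_adm. Qed.

Let reg_itv i j k : - K <= chempot_reg h a tau g b phi i j k <= K.
Proof. by rewrite -ler_norml reg_bnd. Qed.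

Let log_ratio_c_itv : - `|log_ratio c| <= log_ratio c <= `|log_ratio c|.
Proof. by rewrite -ler_norml. Qed.

(* Otherwise move mass from (i, j, k) to a node below the mean c: the potential at
   (i, j, k) is at least -ln d - K, that at the other node at most log_ratio c + K. *)
Lemma minimizer_lt_top i j k : d < 1 - phi i j k.
Proof.
have [[cT cB] d0] := (c_top, c_bot, d_gt0).
rewrite ltNge; apply/negP => top; have [phi_l phi_r] := phi_adm.1 i j k.
have {top phi_l phi_r} phi_top : phi i j k = 1 - d by lra.
have [i' [j' [k' phi_le]]] := exists_le_of_gsum_eq N_gt0 phi_sum.
have [phi'_l phi'_r] := phi_adm.1 i' j' k'.
have p'p : (i', j', k') != (i, j, k).
  by apply/negP => /eqP [ei ej ek]; move: phi_le; rewrite ei ej ek phi_top; lra.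
have move_in t : 0 < t -> t < 1 - d - c ->
    inside d (phi i' j' k' + t) /\ inside d (phi i j k - t).
  by rewrite phi_top => *; split; split; lra.
have := chempot_transfer p'p (t0 := 1 - d - c) ltac:(lra) move_in.
rewrite /chempot phi_top => mu_le.
have := log_ratio_top d_gt0 ltac:(lra).
have : log_ratio (phi i' j' k') <= log_ratio c by apply: (ler_log_ratio _ phi_le); lra.
have /andP [reg_l _] := reg_itv i j k; have /andP [_ reg'_r] := reg_itv i' j' k'.
have /andP [_ lr_c] := log_ratio_c_itv; have := d_small.
lra.
Qed.

Lemma minimizer_gt_bot i j k : d < 1 + phi i j k.
Proof.
have [[cT cB] d0] := (c_top, c_bot, d_gt0).
rewrite ltNge; apply/negP => bot; have [phi_l phi_r] := phi_adm.1 i j k.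
have {bot phi_l phi_r} phi_bot : phi i j k = - (1 - d) by lra.
have [i' [j' [k' phi_ge]]] := exists_le_of_gsum_eq N_gt0 (esym phi_sum).
have [phi'_l phi'_r] := phi_adm.1 i' j' k'.
have pp' : (i, j, k) != (i', j', k').
  by apply/negP => /eqP [ei ej ek]; move: phi_ge; rewrite -ei -ej -ek phi_bot; lra.
have move_in t : 0 < t -> t < 1 + c - d ->
    inside d (phi i j k + t) /\ inside d (phi i' j' k' - t).
  by rewrite phi_bot => *; split; split; lra.
have := chempot_transfer pp' (t0 := 1 + c - d) ltac:(lra) move_in.
rewrite /chempot phi_bot => mu_le.
have := log_ratio_bot d_gt0 ltac:(lra).
have : log_ratio c <= log_ratio (phi i' j' k') by apply: (ler_log_ratio _ phi_ge); lra.
have /andP [_ reg_r] := reg_itv i j k; have /andP [reg'_l _] := reg_itv i' j' k'.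
have /andP [lr_c _] := log_ratio_c_itv; have := d_small.
lra.
Qed.

Lemma minimizer_chempot_le i j k i' j' k' : mu i j k <= mu i' j' k'.
Proof.
have [[-> -> ->] //|pp'] := eqVneq (i', j', k') (i, j, k).
have d0 := d_gt0.
have := minimizer_lt_top i' j' k'; have := minimizer_gt_bot i j k.
have [? ?] := phi_adm.1 i j k; have [? ?] := phi_adm.1 i' j' k' => bot top.
apply: (chempot_transfer pp' (t0 := Num.min (1 - d - phi i' j' k') (1 + phi i j k - d))).
  by rewrite lt_min; apply/andP; split; lra.
by move=> t t_gt0; rewrite lt_min => /andP [? ?]; split; split; lra.
Qed.

Lemma minimizer_equilibrium :
  (forall i j k, -1 < phi i j k < 1) /\ exists C, forall i j k, mu i j k = C.
Proof.
split=> [i j k|].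
  have d0 := d_gt0; have := minimizer_lt_top i j k; have := minimizer_gt_bot i j k.
  by move=> ? ?; apply/andP; split; lra.
have o := Ordinal N_gt0; exists (mu o o o) => i j k.
by apply/le_anti; rewrite !minimizer_chempot_le.
Qed.

End Minimizer.

Lemma exists_chempot_cst (R : realType) (N : nat) (h a tau : R) (g b : grid R N) c :
  h != 0 -> (0 < N)%N -> -1 < c < 1 -> gsum (fun (_ _ _ : 'I_N) => c) = gsum b ->
  exists2 phi : grid R N, (forall i j k, -1 < phi i j k < 1) /\ gsum phi = gsum b &
    exists C, forall i j k, chempot h a tau g b phi i j k = C.
Proof.
move=> h_neq0 N_gt0 /andP [c_gt c_lt] c_sum.
have c_abs : `|c| < 1 by rewrite ltr_norml c_gt.
set K := reg_bound h a tau g b; set X := `|log_ratio c| + 2 * `|K| + 1.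
(* Small enough for c to be strictly inside and for -ln d to exceed X. *)
set d := Num.min ((1 - `|c|) / 2) (expR (- X)).
have d_gt0 : 0 < d by rewrite lt_min expR_gt0 divr_gt0 // subr_gt0.
have d_le : d <= (1 - `|c|) / 2 by rewrite ge_min lexx.
have := (ler_norm c, ler_norm (- c)); rewrite normrN => -[cN cN'].
have [c_top c_bot] : d < 1 - c /\ d < 1 + c by split; lra.
have d_small : `|log_ratio c| + 2 * K < - ln d.
  have : ln d <= - X by rewrite -[leRHS]expRK ler_ln ?posrE ?expR_gt0 // ge_min lexx orbT.
  by have := ler_norm K; rewrite /X; lra.
have [|phi phi_adm phi_min] := exists_energy_min h a tau g d_gt0 _ c_sum.
  by split; lra.
have reg_bnd : forall i j k, `|chempot_reg h a tau g b phi i j k| <= K.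
  apply: chempot_reg_bounded => i j k.
  by have [? ?] := phi_adm.1 i j k; apply/andP; split; lra.
have [phi_in mu_cst] := minimizer_equilibrium h_neq0 N_gt0 d_gt0 phi_adm phi_min
  c_sum c_top c_bot reg_bnd d_small.
by exists phi; last by []; split; last by case: phi_adm.
Qed.

Section Norms.
Variables (R : realType) (N : nat) (L : R).
Implicit Types u : grid R N.

Lemma normInf_ge u i j k : `|u i j k| <= normInf u.
Proof. by do 2 apply: le_trans (le_bigmax _ _ _); apply: le_bigmax. Qed.

Lemma normInf_lt u r : 0 < r -> (forall i j k, `|u i j k| < r) -> normInf u < r.
Proof. by move=> r_gt0 u_lt; do 3 (apply: bigmax_lt => // ? _); apply: u_lt. Qed.

Lemma gmean_gsum u : L != 0 -> (0 < N)%N -> gmean L (L / N%:R) u = gsum u / N%:R ^+ 3.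
Proof.
move=> L_neq0 N_gt0; rewrite /gmean /ip.
have -> : \sum_(i < N) \sum_(j < N) \sum_(k < N) u i j k * 1 = gsum u.
  exact: (eq_gsum (u := fun i j k => u i j k * 1) (fun i j k => mulr1 _)).
by field; rewrite L_neq0 pnatr_eq0 -lt0n N_gt0.
Qed.

End Norms.

Section BDF2Scheme.
Variables (R : realType) (N : nat) (h eps theta0 dt A : R) (phinm1 phin : grid R N).
Local Notation G := (grid R N).

Definition bdf_tau : R := 2 * dt / 3.
Definition bdf_kappa : R := A * dt + eps ^+ 2.
Definition bdf_target : G := fun i j k => (4 * phin i j k - phinm1 i j k) / 3.
Definition bdf_source : G := fun i j k =>
  - (theta0 * (2 * phin i j k - phinm1 i j k)) + A * dt * lap_h h phin i j k.

Lemma gsum_bdf_target : gsum phin = gsum phinm1 -> gsum bdf_target = gsum phin.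
Proof.
move=> same_mass.
rewrite (eq_gsum (v := fun i j k => 3^-1 * (4 * phin i j k - phinm1 i j k))).
  by rewrite gsumZ gsumB gsumZ -same_mass; field.
by move=> i j k; rewrite mulrC.
Qed.

Lemma scheme_of_chempot_cst (phi : G) C : dt != 0 -> h != 0 -> (0 < N)%N ->
  gsum phi = gsum bdf_target ->
  (forall i j k, chempot h bdf_kappa bdf_tau bdf_source bdf_target phi i j k = C) ->
  exists mu, scheme h eps theta0 dt A phinm1 phin phi mu.
Proof.
move=> dt_neq0 h_neq0 N_gt0 phi_mass mu_cst.
set mu : G := fun i j k => ln (1 + phi i j k) - ln (1 - phi i j k)
   - theta0 * (2 * phin i j k - phinm1 i j k)
   - A * dt * lap_h h (fun a b c => phi a b c - phin a b c) i j k
   - eps ^+ 2 * lap_h h phi i j k.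
exists mu; split=> // i j k.
have -> : mu = pert (fun _ _ _ => C) (ilap h (gsub phi bdf_target)) (1 / bdf_tau).
  apply: funext => x; apply: funext => y; apply: funext => z.
  rewrite /pert -(mu_cst x y z) /chempot /chempot_reg /log_ratio.
  by rewrite /mu /bdf_source /bdf_kappa /lap_h; ring.
rewrite lap_pert /pert lap_cst add0r lap_ilap ?gsumB ?phi_mass ?subrr //.
by rewrite /gsub /bdf_target /bdf_tau; field; rewrite dt_neq0.
Qed.

Lemma scheme_uniq (phi1 mu1 phi2 mu2 : G) : 0 < dt -> 0 <= A ->
  (forall i j k, -1 < phi1 i j k < 1) -> (forall i j k, -1 < phi2 i j k < 1) ->
  scheme h eps theta0 dt A phinm1 phin phi1 mu1 ->
  scheme h eps theta0 dt A phinm1 phin phi2 mu2 -> phi1 = phi2.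
Proof.
move=> dt_gt0 A_ge0 phi1_in phi2_in [dphi1 mu1E] [dphi2 mu2E].
set e := gsub phi1 phi2; set m := gsub mu1 mu2.
have eE i j k : e i j k = bdf_tau * lap_h h m i j k.
  have -> : lap_h h m i j k = lap_h h mu1 i j k - lap_h h mu2 i j k.
    by rewrite /lap_h /m /gsub; ring.
  by rewrite -dphi1 -dphi2 /e /gsub /bdf_tau; field; rewrite gt_eqF.
have mE i j k : m i j k =
    (log_ratio (phi1 i j k) - log_ratio (phi2 i j k)) - bdf_kappa * lap_h h e i j k.
  by rewrite /m /gsub mu1E mu2E /log_ratio /bdf_kappa /e /gsub /lap_h; ring.
have em_le0 : gdot e m <= 0.
  rewrite /gdot (eq_gsum (v := fun i j k => bdf_tau * (m i j k * lap_h h m i j k))).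
    rewrite gsumZ; apply: mulr_ge0_le0; last exact: gdot_lap_le0.
    by rewrite /bdf_tau divr_ge0 ?mulr_ge0 ?ltW.
  by move=> i j k; rewrite eE; ring.
have em_split : gdot e m
    = gsum (fun i j k => e i j k * (log_ratio (phi1 i j k) - log_ratio (phi2 i j k)))
      - bdf_kappa * gdot e (lap_h h e).
  by rewrite -gsumZ -gsumB; apply: eq_gsum => i j k; rewrite mE; ring.
have kappa_ge0 : 0 <= bdf_kappa.
  by rewrite /bdf_kappa addr_ge0 ?sqr_ge0 // mulr_ge0 // ltW.
have mono_le0 :
    gsum (fun i j k => e i j k * (log_ratio (phi1 i j k) - log_ratio (phi2 i j k))) <= 0.
  by have := mulr_ge0_le0 kappa_ge0 (gdot_lap_le0 h e); rewrite em_split in em_le0; lra.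
have mono0 := gsum_ge0_eq0
  (fun i j k => log_ratio_mono (phi1_in i j k) (phi2_in i j k)) mono_le0.
apply: funext => i; apply: funext => j; apply: funext => k.
exact: log_ratio_mono_eq0 (phi1_in i j k) (phi2_in i j k) (mono0 i j k).
Qed.

End BDF2Scheme.

Unset Implicit Arguments. Set Strict Implicit.

Theorem theorem6p1 (R : realType) (L eps theta0 dt A M : R) (N : nat)
  (phin phinm1 : grid R N) :
  0 < L -> 0 < eps -> 0 < theta0 -> 0 < dt -> 0 <= A -> (0 < N)%N -> 0 < M ->
  normInf phin <= M -> normInf phinm1 <= M ->
  gmean L (L / N%:R) phin = gmean L (L / N%:R) phinm1 ->
  `|gmean L (L / N%:R) phin| < 1 ->
  exists! phi : grid R N,
    gmean L (L / N%:R) (fun i j k => phi i j k - gmean L (L / N%:R) phin) = 0 /\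
    normInf phi < 1 /\
    exists mu : grid R N, scheme (L / N%:R) eps theta0 dt A phinm1 phin phi mu.
Proof.
move=> L_gt0 _ _ dt_gt0 A_ge0 N_gt0 _ _ _ same_mean mean_lt1.
have gmeanE u := gmean_gsum u (lt0r_neq0 L_gt0) N_gt0.
have N3_neq0 : (N%:R : R) ^+ 3 != 0 by rewrite expf_neq0 // pnatr_eq0 -lt0n.
have h_neq0 : L / N%:R != 0.
  by apply: mulf_neq0; [exact: lt0r_neq0 | rewrite invr_eq0 pnatr_eq0 -lt0n].
set h := L / N%:R in h_neq0 *; set c := gmean L h phin in mean_lt1 *.
have same_mass : gsum phin = gsum phinm1.
  move: same_mean; rewrite !gmeanE => /(congr1 ( *%R^~ (N%:R ^+ 3))).
  by rewrite /= !divfK.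
have c_mass : gsum (fun (_ _ _ : 'I_N) => c) = gsum (bdf_target phinm1 phin).
  by rewrite gsum_cst gsum_bdf_target // /c gmeanE mulrC divfK.
have c_in : -1 < c < 1 by rewrite -ltr_norml.
have [phi [phi_in phi_mass] [C mu_cst]] := exists_chempot_cst (bdf_kappa eps dt A)
  (bdf_tau dt) (bdf_source h theta0 dt A phinm1 phin) h_neq0 N_gt0 c_in c_mass.
have [mu phi_scheme] :=
  scheme_of_chempot_cst (lt0r_neq0 dt_gt0) h_neq0 N_gt0 phi_mass mu_cst.
exists phi; split; first split; [|split; last by exists mu|].
- by rewrite gmeanE gsumB phi_mass -c_mass subrr mul0r.
- by apply: normInf_lt => // i j k; rewrite ltr_norml phi_in.
move=> psi [_ [psi_lt [mu' psi_scheme]]].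
apply: scheme_uniq dt_gt0 A_ge0 phi_in _ phi_scheme psi_scheme => i j k.
by rewrite -ltr_norml (le_lt_trans (normInf_ge psi i j k)).
Qed.
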